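(* Fix $r\ge2$ and $c>\ln4$, and set $c'=c/2-\ln2$ and $\tilde\varepsilon_r=(cm\,2^{r-m})^{1/2^r}$. For $\mathrm{RM}(r,m)$ used on a binary symmetric channel with crossover probability $(1-\tilde\varepsilon_r)/2$, for all sufficiently large $m$ the algorithm $\Phi_r^m$ satisfies, for every end node of its recursion, $$p<\max\left\{e^{-c'm},\,2^{-(m-r)/2+m^{1/2}}\right\},$$ where $p$ is the conditional error probability at that end node defined below; in particular all these probabilities tend to $0$ as $m\to\infty$.
   Context: Assume the all-ones codeword (in $\pm1$ form) is sent; received $y_1,\dots,y_n$ ($n=2^m$) are i.i.d. with $\Pr\{y_i=-1\}=(1-\tilde\varepsilon_r)/2$. For binary strings $\xi$ define $\mathbf y(\varnothing)=\mathbf y$ and, splitting $\mathbf y(\underline\xi)$ into halves $(\mathbf y',\mathbf y'')$, $\mathbf y(\underline\xi,0)=\mathbf y'\mathbf y''$ (componentwise), $\mathbf y(\underline\xi,1)=(\mathbf y'+\mathbf y'')/2$. Algorithm $\Phi_r^m$: on $(\mathbf y',\mathbf y'')$ with $1<r<m$ it decodes $\mathbf y'\mathbf y''$ recursively in $\mathrm{RM}(r-1,m-1)$ obtaining $\hat{\mathbf v}$, then $(\mathbf y'+\mathbf y''\hat{\mathbf v})/2$ recursively in $\mathrm{RM}(r,m-1)$; at $r=1$ (biorthogonal code) or $r=m$ (full space) it performs MD decoding (output the codeword maximizing the inner product with the input). In the recursion tree, from node $(m,r)$ a step $0$ leads to $(m'-1,r'-1)$ and a step $1$ to $(m'-1,r')$;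 the walk stops at a biorthogonal node $(g+1,1)$ or at a full-space node $(h,h)$. With all previous decisions correct, the input at the end node reached by the step string $\underline\xi$ is $\mathbf y(\underline\xi)$. For a biorthogonal node, $p$ is the probability that MD decoding of $\mathbf y(\underline\xi)$ in $\mathrm{RM}(1,g+1)$ returns a codeword other than the all-ones word; for a full-space node, for each coordinate $\sigma$, $p$ is the probability that the $\sigma$-th entry of $\mathbf y(\underline\xi)$ is negative (zero counted with probability $1/2$). *)

From Stdlib Require Import Bool Reals List Arith.
Import ListNotations.
Open Scope R_scope.

(** Channel outputs: a bit [true] means the received symbol is -1, [false] means +1. *)
Definition sgn (b : bool) : R := if b then -1 else 1.

Fixpoint all_lists (n : nat) : list (list bool) :=
  match n with
  | O => [@nil bool]
  | S k => map (cons false) (all_lists k) ++ map (cons true) (all_lists k)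
  end.

Definition sumR (l : list R) : R := fold_right Rplus 0 l.

Definition weight (eps : R) (l : list bool) : R :=
  fold_right Rmult 1 (map (fun b : bool => if b then (1 - eps) / 2 else (1 + eps) / 2) l).

Definition Ex (eps : R) (n : nat) (f : list bool -> R) : R :=
  sumR (map (fun l => weight eps l * f l) (all_lists n)).

Definition indic (b : bool) : R := if b then 1 else 0.

Definition halves (v : list R) : list R * list R :=
  (firstn (length v / 2) v, skipn (length v / 2) v).

(** One step of the y(xi) construction: step [false] = 0, step [true] = 1. *)
Definition ystep (b : bool) (v : list R) : list R :=
  let '(v1, v2) := halves v in
  if b then map (fun p => (fst p + snd p) / 2) (combine v1 v2)
  else map (fun p => fst p * snd p) (combine v1 v2).

Definition yxi (xi : list bool) (y : list R) : list R :=
  fold_left (fun v b => ystep b v) xi y.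

(** Recursion tree walk from node (m, r): step 0 -> (m-1, r-1), step 1 -> (m-1, r).
    [endpath m r xi]: every node strictly before the end is interior (1 < r' < m')
    and the walk stops at a biorthogonal node (r' = 1) or a full-space node (r' = m'). *)
Fixpoint endpath (m r : nat) (xi : list bool) : Prop :=
  match xi with
  | [] => r = 1%nat \/ r = m
  | b :: xi' => (1 < r < m)%nat /\ endpath (m - 1) (if b then r else r - 1) xi'
  end.

Fixpoint final_node (m r : nat) (xi : list bool) : nat * nat :=
  match xi with
  | [] => (m, r)
  | b :: xi' => final_node (m - 1) (if b then r else r - 1) xi'
  end.

(** RM(1,k) in +-1 form: word of the affine function a0 + sum_i a_i x_i,
    coordinate j <-> binary expansion of j. *)
Fixpoint lin (a : list bool) (j : nat) : bool :=
  match a with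
  | [] => false
  | ai :: a' => xorb (ai && Nat.odd j) (lin a' (Nat.div2 j))
  end.

Definition rm1_word (k : nat) (a0 : bool) (a : list bool) : list R :=
  map (fun j => sgn (xorb a0 (lin a j))) (seq 0 (2 ^ k)).

Definition rm1_code (k : nat) : list (list R) :=
  flat_map (fun a => [rm1_word k false a; rm1_word k true a]) (all_lists k).

Definition inner (u v : list R) : R := sumR (map (fun p => fst p * snd p) (combine u v)).

Definition all_ones (k : nat) : list R := repeat 1 (2 ^ k).

Definition Rleb (x y : R) : bool := if Rle_dec x y then true else false.
Definition Rltb (x y : R) : bool := if Rlt_dec x y then true else false.
Definition Reqb (x y : R) : bool := if Req_EM_T x y then true else false.
Definition is_all_ones (c : list R) : bool := forallb (fun x => Reqb x 1) c.

(** MD decoding of v in RM(1,k) fails (returns a codeword other than all-ones)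
    for some maximum-inner-product decoder: some codeword c <> 1 has
    <v,c> >= <v,1>. *)
Definition md_error (k : nat) (v : list R) : bool :=
  existsb (fun c => negb (is_all_ones c) && Rleb (inner v (all_ones k)) (inner v c))
          (rm1_code k).

Definition p_biorth (eps : R) (m : nat) (xi : list bool) : R :=
  Ex eps (2 ^ m) (fun l =>
    indic (md_error (m - length xi) (yxi xi (map sgn l)))).

(** Error probability of coordinate sigma at a full-space end node reached by xi
    (negative entry, zero counted with probability 1/2). *)
Definition p_full (eps : R) (m : nat) (xi : list bool) (sigma : nat) : R :=
  Ex eps (2 ^ m) (fun l =>
    let v := nth sigma (yxi xi (map sgn l)) 0 in
    indic (Rltb v 0) + / 2 * indic (Reqb v 0)).

Definition eps_tilde (c : R) (r m : nat) : R :=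
  Rpower (c * INR m * 2 ^ r / 2 ^ m) (/ 2 ^ r).

Definition err_bound (c : R) (r m : nat) : R :=
  Rmax (exp (- (c / 2 - ln 2) * INR m))
       (Rpower 2 (- (INR m - INR r) / 2 + sqrt (INR m))).

(* Under the all-ones codeword the entries of [y(xi)] are independent copies
   of a variable obtained from a +-1 bit of mean [eps] by iterating
   [X |-> X X'] (step 0) and [X |-> (X + X')/2] (step 1) on independent copies.
   For laws supported in [[-1, 1]] a step 0 squares the mean and multiplies a
   sub-Gaussian variance proxy by at most [1 + eps^2], and a step 1 halves it;
   so after [z] zeros and [o] ones the entries are sub-Gaussian with mean
   [eps^(2^z)] and proxy [(1 + eps^2)^z / 2^o] (and exact bits while [o = 0]).
   A Chernoff bound then controls the sign error at a full-space node, and a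
   union bound over [RM(1, k+1)], whose nonconstant affine functions vanish on
   exactly half of the points, controls MD decoding at a biorthogonal node.
   Since [eps^(2^r) = c m 2^(r-m)], both bounds fall below [exp (-c' m)] for
   large [m]. *)

From Stdlib Require Import Reals List Arith Lra Lia Bool.
From Coquelicot Require Import Coquelicot.
Import ListNotations.
Open Scope R_scope.

Lemma exp_le x y : x <= y -> exp x <= exp y.
Proof. intros [H | ->]; [left; apply exp_increasing|]; lra. Qed.

Lemma nonneg_of_convex_min (g g1 g2 : R -> R) :
  (forall t, derivable_pt_lim g t (g1 t)) -> (forall t, derivable_pt_lim g1 t (g2 t)) ->
  (forall t, 0 <= g2 t) -> g 0 = 0 -> g1 0 = 0 -> forall t, 0 <= g t.
Proof.
  intros Dg Dg1 Hg2 g0 g10.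
  assert (Hg1p : forall s, 0 <= s -> 0 <= g1 s).
  { intros s [Hs | <-]; [| lra].
    destruct (MVT_cor3 g1 g2 0 s Hs (fun x _ _ => Dg1 x)) as [d [_ [_ E]]].
    specialize (Hg2 d). nra. }
  assert (Hg1n : forall s, s <= 0 -> g1 s <= 0).
  { intros s [Hs | ->]; [| lra].
    destruct (MVT_cor3 g1 g2 s 0 Hs (fun x _ _ => Dg1 x)) as [d [_ [_ E]]].
    specialize (Hg2 d). nra. }
  intros t. destruct (Rtotal_order t 0) as [Ht | [-> | Ht]]; [ | lra | ].
  - destruct (MVT_cor3 g g1 t 0 Ht (fun x _ _ => Dg x)) as [d [_ [Hd E]]].
    specialize (Hg1n d Hd). nra.
  - destruct (MVT_cor3 g g1 0 t Ht (fun x _ _ => Dg x)) as [d [Hd [_ E]]].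
    specialize (Hg1p d Hd). nra.
Qed.

(* Hoeffding's lemma for a variable with values [1] and [-1] and mean [mu]:
   [t^2/2 - mu t - ln E[exp(-t X)]] vanishes to second order at [0] and is convex. *)
Lemma ln_mgf_pm1_le mu t : -1 <= mu <= 1 ->
  ln ((1 + mu) / 2 * exp (- t) + (1 - mu) / 2 * exp t) <= - t * mu + t ^ 2 / 2.
Proof.
  intros Hmu.
  set (p := (1 + mu) / 2). set (q := (1 - mu) / 2).
  set (u := fun t => p * exp (- t) + q * exp t).
  set (w := fun t => q * exp t - p * exp (- t)).
  assert (Hu : forall t, 0 < u t).
  { intros s; unfold u, p, q. pose proof (exp_pos s); pose proof (exp_pos (- s)).
    destruct (Rle_lt_dec (1 + mu) 0); nra. }
  set (g := fun t => - mu * t + t ^ 2 / 2 - ln (u t)).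
  set (g1 := fun t => - mu + t - w t / u t).
  enough (Hg : 0 <= g t) by (unfold g, u in Hg; fold p q; lra).
  apply (nonneg_of_convex_min g g1 (fun t => (w t / u t) ^ 2)).
  - intros s. apply is_derive_Reals. unfold g, g1, u, w.
    specialize (Hu s); unfold u in Hu. auto_derive; [lra | field; lra].
  - intros s. apply is_derive_Reals. unfold g1, u, w.
    specialize (Hu s); unfold u in Hu. auto_derive; [lra | field; lra].
  - intros s. apply pow2_ge_0.
  - unfold g, u. rewrite Ropp_0, exp_0.
    replace (p * 1 + q * 1) with 1 by (unfold p, q; field). rewrite ln_1. simpl; lra.
  - unfold g1, w, u. rewrite Ropp_0, exp_0. unfold p, q. field; lra.
Qed.

Lemma mgf_pm1_le mu t : -1 <= mu <= 1 ->
  (1 + mu) / 2 * exp (- t) + (1 - mu) / 2 * exp t <= exp (- t * mu + t ^ 2 / 2).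
Proof.
  intros Hmu. pose proof (ln_mgf_pm1_le mu t Hmu) as Hl.
  assert (Hpos : 0 < (1 + mu) / 2 * exp (- t) + (1 - mu) / 2 * exp t).
  { pose proof (exp_pos t); pose proof (exp_pos (- t)).
    destruct (Rle_lt_dec (1 + mu) 0); nra. }
  rewrite <- (exp_ln _ Hpos). now apply exp_le.
Qed.

(** * Finitely supported laws *)

(* A law is a list of (weight, atom) pairs. *)
Definition law := list (R * R).

Fixpoint expect (L : law) (g : R -> R) : R :=
  match L with [] => 0 | pv :: L' => fst pv * g (snd pv) + expect L' g end.

Definition nonneg_law (L : law) := List.Forall (fun pv => 0 <= fst pv) L.
Definition pm1_law (L : law) := List.Forall (fun pv => -1 <= snd pv <= 1) L.
Definition proba_law (L : law) := expect L (fun _ => 1) = 1.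

Lemma expect_ext L f g : (forall x, f x = g x) -> expect L f = expect L g.
Proof. intros H; induction L as [|[p v] L IH]; simpl; [lra | rewrite H, IH; lra]. Qed.

Lemma expect_plus L f g : expect L (fun x => f x + g x) = expect L f + expect L g.
Proof. induction L as [|[p v] L IH]; simpl; [lra | rewrite IH; ring]. Qed.

Lemma expect_scal L a f : expect L (fun x => a * f x) = a * expect L f.
Proof. induction L as [|[p v] L IH]; simpl; [lra | rewrite IH; ring]. Qed.

Lemma expect_app L1 L2 g : expect (L1 ++ L2) g = expect L1 g + expect L2 g.
Proof. induction L1 as [|[p v] L IH]; simpl; [lra | rewrite IH; ring]. Qed.

Lemma expect_const L a : proba_law L -> expect L (fun _ => a) = a.
Proof.
  intros H. rewrite (expect_ext L _ (fun _ => a * 1)) by (intros; ring).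
  rewrite expect_scal, H; ring.
Qed.

Lemma expect_swap L L' (K : R -> R -> R) :
  expect L (fun x => expect L' (K x)) = expect L' (fun y => expect L (fun x => K x y)).
Proof.
  induction L as [|[p v] L IH]; simpl.
  - induction L' as [|[q w] L' IH']; simpl; [lra | rewrite <- IH'; ring].
  - rewrite IH, <- expect_scal, <- expect_plus. apply expect_ext; intros; simpl; ring.
Qed.

Lemma expect_le_in L f g : nonneg_law L -> pm1_law L ->
  (forall x, -1 <= x <= 1 -> f x <= g x) -> expect L f <= expect L g.
Proof.
  intros Hn Hb H; induction Hn as [|[p v] L Hp Hn IH]; simpl; [lra|].
  inversion Hb; subst.
  apply Rplus_le_compat; [apply Rmult_le_compat_l | apply IH]; auto.
Qed.

Lemma expect_le L f g : nonneg_law L -> (forall x, f x <= g x) -> expect L f <= expect L g.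
Proof.
  intros Hn H; induction Hn as [|[p v] L Hp Hn IH]; simpl in *; [lra|].
  apply Rplus_le_compat; [apply Rmult_le_compat_l|]; auto.
Qed.

Lemma expect_nonneg L f : nonneg_law L -> (forall x, 0 <= f x) -> 0 <= expect L f.
Proof.
  intros Hn H; induction Hn as [|[p v] L Hp Hn IH]; simpl in *; [lra|].
  apply Rplus_le_le_0_compat; [apply Rmult_le_pos|]; auto.
Qed.

Definition bit_law (e : R) : law := [((1 + e) / 2, 1); ((1 - e) / 2, -1)].

Lemma bit_law_nonneg e : -1 <= e <= 1 -> nonneg_law (bit_law e).
Proof. intros He. repeat apply Forall_cons; try apply Forall_nil; simpl; lra. Qed.

Lemma bit_law_pm1 e : pm1_law (bit_law e).
Proof. repeat apply Forall_cons; try apply Forall_nil; simpl; lra. Qed.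

Lemma bit_law_proba e : proba_law (bit_law e).
Proof. unfold proba_law; simpl; field. Qed.

(** * The laws of [ystep] and [yxi] *)

Definition step_op (b : bool) (x y : R) : R := if b then (x + y) / 2 else x * y.

Definition law_step (b : bool) (L : law) : law :=
  flat_map (fun pv => map (fun qw => (fst pv * fst qw, step_op b (snd pv) (snd qw))) L) L.

Definition law_path (xi : list bool) (L : law) : law := fold_left (fun L b => law_step b L) xi L.

Lemma expect_law_step b L g :
  expect (law_step b L) g = expect L (fun x => expect L (fun y => g (step_op b x y))).
Proof.
  unfold law_step.
  enough (H : forall L1, expect (flat_map (fun pv => map (fun qw =>
              (fst pv * fst qw, step_op b (snd pv) (snd qw))) L) L1) g
            = expect L1 (fun x => expect L (fun y => g (step_op b x y)))) by apply H.
  induction L1 as [|[p v] L1 IH]; simpl; [lra|].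
  rewrite expect_app, IH. f_equal.
  clear IH. induction L as [|[q w] L IH]; simpl; [ring | rewrite IH; ring].
Qed.

Lemma law_step_nonneg b L : nonneg_law L -> nonneg_law (law_step b L).
Proof.
  unfold nonneg_law, law_step. rewrite !Forall_forall. intros H pv Hpv.
  apply in_flat_map in Hpv as [x [Hx Hpv]]. apply in_map_iff in Hpv as [y [<- Hy]].
  apply Rmult_le_pos; auto.
Qed.

Lemma law_step_pm1 b L : pm1_law L -> pm1_law (law_step b L).
Proof.
  unfold pm1_law, law_step. rewrite !Forall_forall. intros H pv Hpv.
  apply in_flat_map in Hpv as [x [Hx Hpv]]. apply in_map_iff in Hpv as [y [<- Hy]].
  pose proof (H x Hx); pose proof (H y Hy). unfold step_op; destruct b; simpl; split; nra.
Qed.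

Lemma law_step_proba b L : proba_law L -> proba_law (law_step b L).
Proof.
  unfold proba_law; intros H. rewrite expect_law_step.
  rewrite (expect_ext _ _ (fun _ => 1)); auto.
Qed.

Fixpoint expectn (L : law) (n : nat) (G : list R -> R) : R :=
  match n with
  | O => G []
  | S n' => expect L (fun x => expectn L n' (fun v => G (x :: v)))
  end.

Lemma expectn_ext L n G G' :
  (forall v, length v = n -> G v = G' v) -> expectn L n G = expectn L n G'.
Proof.
  revert G G'; induction n as [|n IH]; intros G G' H; simpl.
  - now apply H.
  - apply expect_ext; intros x; apply IH; intros v Hv; apply H; simpl; lia.
Qed.

Lemma expectn_plus L n F G :
  expectn L n (fun v => F v + G v) = expectn L n F + expectn L n G.
Proof.
  revert F G; induction n as [|n IH]; intros F G; simpl; [reflexivity|].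
  rewrite <- expect_plus; apply expect_ext; intros x; apply IH.
Qed.

Lemma expectn_scal L n a G : expectn L n (fun v => a * G v) = a * expectn L n G.
Proof.
  revert G; induction n as [|n IH]; intros G; simpl; [reflexivity|].
  rewrite <- expect_scal; apply expect_ext; intros x; apply IH.
Qed.

Lemma expectn_const L n a : proba_law L -> expectn L n (fun _ => a) = a.
Proof.
  intros H; induction n as [|n IH]; simpl; [reflexivity|].
  rewrite (expect_ext _ _ (fun _ => a)) by (intros; apply IH). now apply expect_const.
Qed.

Lemma expectn_sum (A : Type) L n (F : A -> list R -> R) l : proba_law L ->
  expectn L n (fun v => sumR (map (fun c => F c v) l)) = sumR (map (fun c => expectn L n (F c)) l).
Proof.
  intros H; induction l as [|c l IH]; simpl.
  - now apply expectn_const.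
  - rewrite expectn_plus, IH. reflexivity.
Qed.

Lemma expectn_le L n F G : nonneg_law L -> (forall v, F v <= G v) ->
  expectn L n F <= expectn L n G.
Proof.
  revert F G; induction n as [|n IH]; intros F G HL H; simpl; [apply H|].
  apply expect_le; auto.
Qed.

Lemma expectn_swap L L' n (K : list R -> R -> R) :
  expectn L n (fun v => expect L' (K v)) = expect L' (fun y => expectn L n (fun v => K v y)).
Proof.
  revert K; induction n as [|n IH]; intros K; simpl; [reflexivity|].
  rewrite (expect_ext _ _ (fun x => expect L' (fun y => expectn L n (fun v => K (x :: v) y)))).
  - apply expect_swap.
  - intros x; apply (IH (fun v => K (x :: v))).
Qed.

Lemma expectn_app L n1 n2 G :
  expectn L (n1 + n2) G = expectn L n1 (fun u => expectn L n2 (fun w => G (u ++ w))).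
Proof.
  revert G; induction n1 as [|n1 IH]; intros G; simpl; [reflexivity|].
  apply expect_ext; intros x. apply (IH (fun v => G (x :: v))).
Qed.

Lemma expectn_nth L n s H : proba_law L -> (s < n)%nat ->
  expectn L n (fun v => H (nth s v 0)) = expect L H.
Proof.
  intros Hm; revert n; induction s as [|s IH]; intros n Hn; destruct n as [|n]; try lia; simpl.
  - apply expect_ext; intros x. now apply expectn_const.
  - rewrite (expect_ext _ _ (fun _ => expect L H)) by (intros x; apply IH; lia).
    now apply expect_const.
Qed.

Definition zip_op (b : bool) (u w : list R) : list R :=
  map (fun p => step_op b (fst p) (snd p)) (combine u w).

Lemma expectn_zip_op L b n G :
  expectn L n (fun u => expectn L n (fun w => G (zip_op b u w))) = expectn (law_step b L) n G.
Proof.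
  revert G; induction n as [|n IH]; intros G; simpl; [reflexivity|].
  rewrite expect_law_step. apply expect_ext; intros x.
  rewrite (expectn_swap L L n (fun u y => expectn L n (fun w => G (zip_op b (x :: u) (y :: w))))).
  apply expect_ext; intros y. apply (IH (fun v => G (step_op b x y :: v))).
Qed.

Lemma ystep_app b u w : length u = length w -> ystep b (u ++ w) = zip_op b u w.
Proof.
  intros H. unfold ystep, halves, zip_op.
  rewrite length_app, H.
  replace ((length w + length w) / 2)%nat with (length u)
    by (rewrite H; apply (Nat.div_unique _ 2 _ 0); lia).
  rewrite firstn_app, skipn_app, Nat.sub_diag, firstn_all, skipn_all, firstn_O, skipn_O, app_nil_r.
  destruct b; reflexivity.
Qed.

Lemma expectn_ystep L b n G :
  expectn L (2 * n) (fun v => G (ystep b v)) = expectn (law_step b L) n G.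
Proof.
  replace (2 * n)%nat with (n + n)%nat by lia.
  rewrite expectn_app, <- expectn_zip_op.
  apply expectn_ext; intros u Hu. apply expectn_ext; intros w Hw.
  rewrite ystep_app by lia. reflexivity.
Qed.

Lemma expectn_yxi xi L n G :
  expectn L (2 ^ length xi * n) (fun v => G (yxi xi v)) = expectn (law_path xi L) n G.
Proof.
  revert L; induction xi as [|b xi IH]; intros L; simpl.
  - now rewrite Nat.add_0_r.
  - replace ((2 ^ length xi + (2 ^ length xi + 0)) * n)%nat
      with (2 * (2 ^ length xi * n))%nat by lia.
    rewrite <- IH.
    exact (expectn_ystep L b (2 ^ length xi * n) (fun v => G (yxi xi v))).
Qed.

Lemma sumR_app a b : sumR (a ++ b) = sumR a + sumR b.
Proof. induction a; simpl; [lra | rewrite IHa; ring]. Qed.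

Lemma sumR_map_scal (A : Type) (l : list A) a f :
  sumR (map (fun x => a * f x) l) = a * sumR (map f l).
Proof. induction l; simpl; [ring | rewrite IHl; ring]. Qed.

Lemma Ex_expectn e n G : Ex e n (fun l => G (map sgn l)) = expectn (bit_law e) n G.
Proof.
  revert G; induction n as [|n IH]; intros G.
  - unfold Ex, weight; simpl. ring.
  - unfold Ex in *; simpl. rewrite map_app, sumR_app, !map_map.
    rewrite <- (IH (fun v => G (1 :: v))), <- (IH (fun v => G (-1 :: v))), <- !sumR_map_scal.
    unfold weight; simpl.
    f_equal; [|rewrite Rplus_0_r]; f_equal; apply map_ext; intros; ring.
Qed.

Lemma law_path_ind (P : law -> Prop) xi L :
  (forall b L, P L -> P (law_step b L)) -> P L -> P (law_path xi L).
Proof. revert L; induction xi as [|b xi IH]; intros L Hstep HL; simpl; auto. Qed.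

Lemma law_path_bit_law_proba e xi : proba_law (law_path xi (bit_law e)).
Proof. apply law_path_ind; [apply law_step_proba | apply bit_law_proba]. Qed.

Lemma law_path_bit_law_nonneg e xi : -1 <= e <= 1 -> nonneg_law (law_path xi (bit_law e)).
Proof. intros He. apply law_path_ind; [apply law_step_nonneg | now apply bit_law_nonneg]. Qed.

(** * Sub-Gaussian bounds along the recursion *)

Definition subgaussian (L : law) (mu s2 : R) :=
  forall t, expect L (fun x => exp (- t * x)) <= exp (- t * mu + t ^ 2 * s2 / 2).

Definition is_bit_law (L : law) (mu : R) :=
  forall g, expect L g = (1 + mu) / 2 * g 1 + (1 - mu) / 2 * g (-1).

Lemma bit_law_is_bit_law e : is_bit_law (bit_law e) e.
Proof. intros g; simpl; ring. Qed.

Lemma is_bit_law_step_prod L mu : is_bit_law L mu -> is_bit_law (law_step false L) (mu * mu).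
Proof.
  intros H g. rewrite expect_law_step. unfold step_op.
  rewrite (expect_ext _ _ (fun x => (1 + mu) / 2 * g x + (1 - mu) / 2 * g (- x))).
  - rewrite H. replace (- -1) with 1 by ring. replace (- (1)) with (-1) by ring. field.
  - intros x. rewrite H, Rmult_1_r. now replace (x * -1) with (- x) by ring.
Qed.

Lemma is_bit_law_subgaussian L mu : -1 <= mu <= 1 -> is_bit_law L mu -> subgaussian L mu 1.
Proof.
  intros Hmu H t. rewrite H.
  replace (- t * 1) with (- t) by ring. replace (- t * -1) with t by ring.
  replace (t ^ 2 * 1 / 2) with (t ^ 2 / 2) by field.
  now apply mgf_pm1_le.
Qed.

Lemma subgaussian_le L mu s2 s2' : s2 <= s2' -> subgaussian L mu s2 -> subgaussian L mu s2'.
Proof.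
  intros Hs H t. eapply Rle_trans; [apply H|]. apply exp_le.
  pose proof (pow2_ge_0 t). nra.
Qed.

Lemma subgaussian_step_avg L mu s2 : nonneg_law L ->
  subgaussian L mu s2 -> subgaussian (law_step true L) mu (s2 / 2).
Proof.
  intros Hn H t. rewrite expect_law_step. unfold step_op.
  set (M := expect L (fun y => exp (- (t / 2) * y))).
  rewrite (expect_ext _ _ (fun x => M * exp (- (t / 2) * x))).
  2: { intros x. unfold M. rewrite Rmult_comm, <- expect_scal. apply expect_ext; intros y.
       rewrite <- exp_plus. f_equal. field. }
  rewrite expect_scal. fold M.
  assert (0 <= M) by (apply expect_nonneg; auto; intros; left; apply exp_pos).
  specialize (H (t / 2)). fold M in H.
  replace (- t * mu + t ^ 2 * (s2 / 2) / 2)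
    with ((- (t / 2) * mu + (t / 2) ^ 2 * s2 / 2) + (- (t / 2) * mu + (t / 2) ^ 2 * s2 / 2))
    by field.
  rewrite exp_plus. now apply Rmult_le_compat.
Qed.

(* Conditioning on the first factor [x] in [[-1, 1]], the product [x Y] is
   sub-Gaussian with mean [x mu] and variance proxy [x^2 s2 <= s2]. *)
Lemma subgaussian_step_prod L mu s2 : nonneg_law L -> pm1_law L -> 0 <= s2 ->
  subgaussian L mu s2 -> subgaussian (law_step false L) (mu * mu) (s2 * (1 + mu * mu)).
Proof.
  intros Hn Hb Hs H t. rewrite expect_law_step. unfold step_op.
  apply Rle_trans with (expect L (fun x => exp (t ^ 2 * s2 / 2) * exp (- (t * mu) * x))).
  - apply expect_le_in; auto. intros v Hv.
    rewrite (expect_ext _ _ (fun y => exp (- (t * v) * y))) by (intros; f_equal; ring).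
    eapply Rle_trans; [apply H|]. rewrite <- exp_plus. apply exp_le.
    pose proof (pow2_ge_0 t). assert (0 <= t ^ 2 * s2) by nra.
    assert (v ^ 2 <= 1) by nra. nra.
  - rewrite expect_scal. eapply Rle_trans.
    + apply Rmult_le_compat_l; [left; apply exp_pos | apply H].
    + rewrite <- exp_plus. apply exp_le. nra.
Qed.

Definition zeros (xi : list bool) : nat := count_occ bool_dec xi false.
Definition ones (xi : list bool) : nat := count_occ bool_dec xi true.

Lemma length_zeros_ones xi : length xi = (zeros xi + ones xi)%nat.
Proof. unfold zeros, ones; induction xi as [|[] xi IH]; simpl; lia. Qed.

(* The variance proxy after [z] product steps and [o] averaging steps; while
   [o = 0] the law is still exactly a two-point law. *)
Definition var_proxy (e : R) (z o : nat) : R :=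
  if (o =? 0)%nat then 1 else (1 + e ^ 2) ^ z / 2 ^ o.

Lemma var_proxy_pos e z o : 0 < var_proxy e z o.
Proof.
  unfold var_proxy. destruct (o =? 0)%nat; [lra|].
  apply Rdiv_lt_0_compat; apply pow_lt; pose proof (pow2_ge_0 e); lra.
Qed.

Lemma pow_le_1 e n : 0 <= e <= 1 -> 0 <= e ^ n <= 1.
Proof. intros H; split; [apply pow_le; lra|]. induction n; simpl; nra. Qed.

Lemma pow_decr e m n : 0 <= e <= 1 -> (m <= n)%nat -> e ^ n <= e ^ m.
Proof.
  intros H Hmn. replace n with (m + (n - m))%nat by lia. rewrite pow_add.
  pose proof (pow_le_1 e m H); pose proof (pow_le_1 e (n - m) H). nra.
Qed.

Lemma pow_pow2_S e z : e ^ 2 ^ S z = e ^ 2 ^ z * e ^ 2 ^ z.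
Proof. rewrite <- pow_add. f_equal. simpl. lia. Qed.

Definition path_invariant (e : R) (L : law) (z o : nat) :=
  (o = 0%nat -> is_bit_law L (e ^ 2 ^ z)) /\ subgaussian L (e ^ 2 ^ z) (var_proxy e z o).

Lemma path_invariant_step e L z o b : 0 <= e <= 1 ->
  nonneg_law L -> pm1_law L -> path_invariant e L z o ->
  path_invariant e (law_step b L) (if b then z else S z) (if b then S o else o).
Proof.
  intros He Hn Hb [Hbit Hsg].
  pose proof (pow_le_1 e (2 ^ z) He) as Hmu.
  assert (HP : 1 <= (1 + e ^ 2) ^ z) by (apply pow_R1_Rle; pose proof (pow2_ge_0 e); lra).
  destruct b; split.
  - discriminate.
  - apply subgaussian_le with (var_proxy e z o / 2); [|now apply subgaussian_step_avg].
    unfold var_proxy. replace (S o =? 0)%nat with false by reflexivity.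
    destruct (o =? 0)%nat eqn:Ho; [apply Nat.eqb_eq in Ho; subst o; rewrite pow_1; lra|].
    simpl. right. field. apply pow_nonzero. lra.
  - intros ->. rewrite pow_pow2_S. now apply is_bit_law_step_prod, Hbit.
  - rewrite pow_pow2_S. unfold var_proxy in *. destruct (o =? 0)%nat eqn:Ho.
    + apply is_bit_law_subgaussian; [nra |].
      apply is_bit_law_step_prod, Hbit. now apply Nat.eqb_eq.
    + apply subgaussian_le with ((1 + e ^ 2) ^ z / 2 ^ o * (1 + e ^ 2 ^ z * e ^ 2 ^ z)).
      * assert (e ^ 2 ^ z * e ^ 2 ^ z <= e ^ 2).
        { rewrite <- pow_pow2_S. apply pow_decr; auto. simpl. pose proof (Nat.pow_nonzero 2 z). lia. }
        assert (0 < / 2 ^ o) by (apply Rinv_0_lt_compat, pow_lt; lra).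
        rewrite <- (tech_pow_Rmult (1 + e ^ 2) z). unfold Rdiv.
        assert (0 <= (1 + e ^ 2) ^ z * / 2 ^ o) by (apply Rmult_le_pos; lra). nra.
      * apply subgaussian_step_prod; auto.
        apply Rlt_le, Rdiv_lt_0_compat; [lra | apply pow_lt; lra].
Qed.

Lemma law_path_invariant e xi : 0 <= e <= 1 -> forall L z o,
  nonneg_law L -> pm1_law L -> path_invariant e L z o ->
  path_invariant e (law_path xi L) (z + zeros xi) (o + ones xi).
Proof.
  intros He; induction xi as [|b xi IH]; intros L z o Hn Hb HL; simpl.
  - now rewrite !Nat.add_0_r.
  - unfold zeros, ones in *; simpl.
    replace (z + _)%nat with ((if b then z else S z) + count_occ bool_dec xi false)%nat
      by (destruct b; simpl; lia).
    replace (o + _)%nat with ((if b then S o else o) + count_occ bool_dec xi true)%nat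
      by (destruct b; simpl; lia).
    apply IH; [now apply law_step_nonneg | now apply law_step_pm1 |].
    now apply path_invariant_step.
Qed.

Lemma law_path_subgaussian e xi : 0 <= e <= 1 ->
  subgaussian (law_path xi (bit_law e)) (e ^ 2 ^ zeros xi) (var_proxy e (zeros xi) (ones xi)).
Proof.
  intros He.
  apply (law_path_invariant e xi He (bit_law e) 0 0);
    [now apply bit_law_nonneg; lra | apply bit_law_pm1 |].
  split; [intros _; simpl; rewrite Rmult_1_r; apply bit_law_is_bit_law |].
  apply is_bit_law_subgaussian; [simpl; lra | simpl; rewrite Rmult_1_r; apply bit_law_is_bit_law].
Qed.

Lemma subgaussian_chernoff L mu s2 : 0 < s2 -> subgaussian L mu s2 ->
  expect L (fun x => exp (- (mu / s2) * x)) <= exp (- (mu ^ 2 / (2 * s2))).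
Proof. intros Hs H. eapply Rle_trans; [apply H|]. apply exp_le. right. field. lra. Qed.

Lemma Ex_yxi e m xi G : (length xi <= m)%nat ->
  Ex e (2 ^ m) (fun l => G (yxi xi (map sgn l)))
  = expectn (law_path xi (bit_law e)) (2 ^ (m - length xi)) G.
Proof.
  intros H. rewrite (Ex_expectn e (2 ^ m) (fun v => G (yxi xi v))), <- expectn_yxi.
  now rewrite <- Nat.pow_add_r, Nat.add_sub_assoc, Nat.add_comm, Nat.add_sub.
Qed.

(** * Error probability at a full-space node *)

Lemma expect_sign_error_le L t : nonneg_law L -> 0 <= t ->
  expect L (fun x => indic (Rltb x 0) + / 2 * indic (Reqb x 0)) <= expect L (fun x => exp (- t * x)).
Proof.
  intros Hn Ht. apply expect_le; auto. intros x.
  pose proof (exp_ineq1_le (- t * x)). pose proof (exp_pos (- t * x)).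
  unfold Rltb, Reqb, indic.
  destruct (Rlt_dec x 0); destruct (Req_EM_T x 0); subst; nra.
Qed.

Lemma p_full_le e m xi s : 0 <= e <= 1 -> (length xi <= m)%nat ->
  (s < 2 ^ (m - length xi))%nat ->
  p_full e m xi s <= exp (- ((e ^ 2 ^ zeros xi) ^ 2 / (2 * var_proxy e (zeros xi) (ones xi)))).
Proof.
  intros He Hm Hs. set (L := law_path xi (bit_law e)).
  assert (HLp : proba_law L) by apply law_path_bit_law_proba.
  assert (HLn : nonneg_law L) by (apply law_path_bit_law_nonneg; lra).
  set (mu := e ^ 2 ^ zeros xi). set (s2 := var_proxy e (zeros xi) (ones xi)).
  assert (Hmu : 0 <= mu) by (apply pow_le; lra).
  assert (Hs2 : 0 < s2) by apply var_proxy_pos.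
  unfold p_full. cbv zeta.
  rewrite (Ex_yxi e m xi (fun v => indic (Rltb (nth s v 0) 0) + / 2 * indic (Reqb (nth s v 0) 0)))
    by assumption.
  fold L. rewrite (expectn_nth L _ s (fun x => indic (Rltb x 0) + / 2 * indic (Reqb x 0)))
    by assumption.
  eapply Rle_trans; [apply (expect_sign_error_le L (mu / s2))|].
  - assumption.
  - apply Rmult_le_pos; [lra | apply Rlt_le, Rinv_0_lt_compat, Hs2].
  - apply subgaussian_chernoff; [assumption | now apply law_path_subgaussian].
Qed.

(** * Error probability at a biorthogonal node *)

Definition prodR (l : list R) : R := fold_right Rmult 1 l.

Lemma prodR_map_mult (A : Type) (f g : A -> R) l :
  prodR (map (fun j => f j * g j) l) = prodR (map f l) * prodR (map g l).
Proof. induction l; simpl; [ring | rewrite IHl; ring]. Qed.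

Lemma prodR_map_nonneg (A : Type) (f : A -> R) l : (forall j, 0 <= f j) -> 0 <= prodR (map f l).
Proof. intros H; induction l; simpl; [lra | apply Rmult_le_pos; auto]. Qed.

Lemma prodR_map_le_pow (A : Type) (f : A -> R) K l : (forall j, 0 <= f j <= K) ->
  prodR (map f l) <= K ^ length l.
Proof.
  intros H; induction l as [|j l IH]; simpl; [lra|].
  apply Rmult_le_compat; [apply H | apply prodR_map_nonneg; apply H | apply H | apply IH].
Qed.

Lemma prodR_seq_double (f : nat -> R) s n :
  prodR (map f (seq (2 * s) (2 * n)))
  = prodR (map (fun j => f (2 * j)%nat * f (2 * j + 1)%nat) (seq s n)).
Proof.
  revert s; induction n as [|n IH]; intros s; [reflexivity|].
  replace (2 * S n)%nat with (S (S (2 * n))) by lia.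
  replace (seq (2 * s) (S (S (2 * n))))
    with ((2 * s)%nat :: (2 * s + 1)%nat :: seq (2 * S s) (2 * n))
    by (simpl; repeat f_equal; lia).
  change (f (2 * s)%nat * (f (2 * s + 1)%nat * prodR (map f (seq (2 * S s) (2 * n))))
    = f (2 * s)%nat * f (2 * s + 1)%nat
      * prodR (map (fun j => f (2 * j)%nat * f (2 * j + 1)%nat) (seq (S s) n))).
  rewrite IH. ring.
Qed.

Lemma lin_double a1 a j : lin (a1 :: a) (2 * j) = lin a j.
Proof. unfold lin at 1; fold lin. rewrite Nat.odd_even, Nat.div2_double. now destruct a1. Qed.

Lemma lin_double_1 a1 a j : lin (a1 :: a) (2 * j + 1) = xorb a1 (lin a j).
Proof. unfold lin at 1; fold lin. rewrite Nat.odd_odd, Nat.div2_odd'. now destruct a1. Qed.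

Lemma lin_zero a j : existsb (fun b => b) a = false -> lin a j = false.
Proof.
  revert j; induction a as [|a1 a IH]; intros j H; simpl in *; [reflexivity|].
  apply orb_false_iff in H as [-> H]. now rewrite IH.
Qed.

(* A nonconstant affine function on [F_2^(k+1)] takes the value [true] on
   exactly [2^k] points, and the constant [true] everywhere. *)
Lemma prod_affine_word_le M k a a0 : 0 <= M <= 1 -> length a = S k ->
  (a0 || existsb (fun b => b) a)%bool = true ->
  prodR (map (fun j => if xorb a0 (lin a j) then M else 1) (seq 0 (2 ^ S k))) <= M ^ 2 ^ k.
Proof.
  intros HM; revert a a0; induction k as [|k IH]; intros a a0 Ha Hnt.
  - destruct a as [|a1 [|]]; simpl in Ha; try lia.
    simpl. destruct a0, a1; simpl in *; nra.
  - destruct a as [|a1 a]; simpl in Ha; [lia|].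
    replace (2 ^ S (S k))%nat with (2 * 2 ^ S k)%nat by (simpl; lia).
    rewrite (prodR_seq_double _ 0), (map_ext _
      (fun j => (if xorb a0 (lin a j) then M else 1) * (if xorb (xorb a0 a1) (lin a j) then M else 1)))
      by (intros j; now rewrite lin_double, lin_double_1, xorb_assoc).
    destruct (existsb (fun b => b) a) eqn:Ea.
    + rewrite prodR_map_mult, pow_pow2_S.
      apply Rmult_le_compat;
        try (apply prodR_map_nonneg; intros j; destruct (xorb _ _); lra);
        apply IH; auto; lia || (rewrite Ea; apply orb_true_r).
    + eapply Rle_trans; [apply (prodR_map_le_pow _ _ M) | rewrite length_seq; lra].
      intros j. rewrite lin_zero by assumption.
      simpl in Hnt. rewrite Ea, orb_false_r in Hnt.
      destruct a0, a1; simpl in *; try discriminate; nra.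
Qed.

Fixpoint prod_coord (hs : list (R -> R)) (v : list R) : R :=
  match hs, v with
  | h :: hs', x :: v' => h x * prod_coord hs' v'
  | _, _ => 1
  end.

Lemma expectn_prod_coord L hs :
  expectn L (length hs) (prod_coord hs) = prodR (map (fun h => expect L h) hs).
Proof.
  induction hs as [|h hs IH]; simpl; [reflexivity|].
  rewrite (expect_ext _ _ (fun x => prodR (map (fun h => expect L h) hs) * h x)).
  - rewrite expect_scal; ring.
  - intros x. rewrite (expectn_scal L (length hs) (h x) (prod_coord hs)), IH; ring.
Qed.

Lemma exp_inner_sub t c v : length v = length c ->
  exp (t * (inner v c - inner v (repeat 1 (length c))))
  = prod_coord (map (fun ci x => exp (t * x * (ci - 1))) c) v.
Proof.
  revert v; induction c as [|y c IH]; intros v Hv; destruct v as [|x v]; simpl in *; try lia.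
  - unfold inner; simpl. rewrite Rminus_diag, Rmult_0_r. apply exp_0.
  - unfold inner in *; simpl. rewrite <- IH by lia. rewrite <- exp_plus. f_equal. ring.
Qed.

(* Dominates the event that [c] beats the all-ones word when [t >= 0]; the
   all-ones word itself is not an error. *)
Definition pairwise_term (t : R) (k : nat) (c v : list R) : R :=
  if is_all_ones c then 0 else exp (t * (inner v c - inner v (all_ones k))).

Lemma rm1_word_length k a0 a : length (rm1_word k a0 a) = (2 ^ k)%nat.
Proof. unfold rm1_word; now rewrite length_map, length_seq. Qed.

Lemma rm1_word_trivial k a0 a : (a0 || existsb (fun b => b) a)%bool = false ->
  is_all_ones (rm1_word k a0 a) = true.
Proof.
  intros H. apply orb_false_iff in H as [-> H].
  unfold is_all_ones, rm1_word. apply forallb_forall. intros x Hx.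
  apply in_map_iff in Hx as [j [<- _]]. rewrite lin_zero by assumption.
  unfold Reqb; simpl. destruct (Req_EM_T 1 1); [reflexivity | contradiction].
Qed.

Lemma expectn_pairwise_term_le L t k a0 a : proba_law L ->
  0 <= expect L (fun x => exp (- (2 * t) * x)) <= 1 -> length a = S k ->
  expectn L (2 ^ S k) (pairwise_term t (S k) (rm1_word (S k) a0 a))
  <= expect L (fun x => exp (- (2 * t) * x)) ^ 2 ^ k.
Proof.
  intros HL HM Ha. set (M := expect L (fun x => exp (- (2 * t) * x))) in *.
  unfold pairwise_term. destruct (is_all_ones (rm1_word (S k) a0 a)) eqn:E.
  { rewrite expectn_const by assumption. apply pow_le; lra. }
  set (c := rm1_word (S k) a0 a).
  assert (Hc : length c = (2 ^ S k)%nat) by apply rm1_word_length.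
  rewrite (expectn_ext _ _ _ (prod_coord (map (fun ci x => exp (t * x * (ci - 1))) c)))
    by (intros v Hv; unfold all_ones; rewrite <- Hc; apply exp_inner_sub; lia).
  rewrite <- Hc, <- (length_map (fun ci x => exp (t * x * (ci - 1))) c), expectn_prod_coord, map_map.
  unfold c, rm1_word. rewrite map_map.
  rewrite (map_ext _ (fun j => if xorb a0 (lin a j) then M else 1)).
  - apply prod_affine_word_le; auto.
    destruct (a0 || existsb (fun b => b) a)%bool eqn:Hnt; [reflexivity|].
    now rewrite rm1_word_trivial in E.
  - intros j. destruct (xorb a0 (lin a j)); simpl.
    + apply expect_ext; intros x. f_equal. ring.
    + rewrite <- (expect_const L 1) by assumption. apply expect_ext; intros x.
      now rewrite Rminus_diag, Rmult_0_r, exp_0.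
Qed.

Lemma all_lists_length k : length (all_lists k) = (2 ^ k)%nat.
Proof. induction k; simpl; [reflexivity | rewrite length_app, !length_map, IHk; lia]. Qed.

Lemma all_lists_in_length k l : In l (all_lists k) -> length l = k.
Proof.
  revert l; induction k as [|k IH]; intros l H; simpl in H.
  - now destruct H as [<- | []].
  - apply in_app_or in H as [H | H]; apply in_map_iff in H as [l' [<- H]]; simpl; f_equal; auto.
Qed.

Lemma rm1_code_split k : exists rest,
  rm1_code k = rm1_word k false (repeat false k) :: rest /\
  length rest = (2 * 2 ^ k - 1)%nat /\
  forall c, In c rest -> exists a0 a, c = rm1_word k a0 a /\ length a = k.
Proof.
  assert (Hhead : exists rest0, all_lists k = repeat false k :: rest0).
  { induction k as [|k [rest0 IH]]; simpl; [now exists [] | rewrite IH; now eexists]. }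
  destruct Hhead as [rest0 Hrest0].
  exists (rm1_word k true (repeat false k)
          :: flat_map (fun a => [rm1_word k false a; rm1_word k true a]) rest0).
  unfold rm1_code. rewrite Hrest0. split; [reflexivity | split].
  - assert (Hlen : length rest0 = (2 ^ k - 1)%nat).
    { pose proof (all_lists_length k) as H. rewrite Hrest0 in H. simpl in H. lia. }
    assert (Hflat : length (flat_map (fun a => [rm1_word k false a; rm1_word k true a]) rest0)
                    = (2 * length rest0)%nat).
    { clear. induction rest0; simpl; [reflexivity | rewrite IHrest0; lia]. }
    simpl. rewrite Hflat, Hlen. pose proof (Nat.pow_nonzero 2 k). lia.
  - intros c [<- | Hc].
    + exists true, (repeat false k). split; [reflexivity | apply repeat_length].
    + apply in_flat_map in Hc as [a [Ha Hc]].
      assert (length a = k) by (apply all_lists_in_length; rewrite Hrest0; now right).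
      destruct Hc as [<- | [<- | []]]; eauto.
Qed.

Lemma indic_existsb (A : Type) (f : A -> bool) l :
  indic (existsb f l) <= sumR (map (fun c => indic (f c)) l).
Proof.
  induction l as [|c l IH]; simpl; [lra|].
  unfold indic in *. destruct (f c), (existsb f l); simpl in *; lra.
Qed.

Lemma sumR_map_le (A : Type) (F G : A -> R) l : (forall c, In c l -> F c <= G c) ->
  sumR (map F l) <= sumR (map G l).
Proof.
  induction l as [|c l IH]; intros H; simpl; [lra|].
  apply Rplus_le_compat; [apply H; now left | apply IH; intros; apply H; now right].
Qed.

Lemma sumR_map_le_const (A : Type) (F : A -> R) l X : (forall c, In c l -> F c <= X) ->
  sumR (map F l) <= INR (length l) * X.
Proof.
  induction l as [|c l IH]; intros H; [simpl; lra|].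
  change (F c + sumR (map F l) <= INR (S (length l)) * X). rewrite S_INR.
  assert (F c <= X) by (apply H; now left).
  assert (sumR (map F l) <= INR (length l) * X) by (apply IH; intros; apply H; now right).
  lra.
Qed.

(* Union bound over the codewords, each event bounded by Markov's inequality for [exp]. *)
Lemma md_error_le_pairwise t k rest v : 0 <= t ->
  rm1_code k = rm1_word k false (repeat false k) :: rest ->
  indic (md_error k v) <= sumR (map (fun c => pairwise_term t k c v) rest).
Proof.
  intros Ht Hcode. unfold md_error. rewrite Hcode. cbn [existsb].
  rewrite rm1_word_trivial by (simpl; clear; induction k; auto).
  simpl. eapply Rle_trans; [apply indic_existsb | apply sumR_map_le]. intros c _.
  unfold pairwise_term, indic. destruct (is_all_ones c); simpl; [lra|].
  unfold Rleb. destruct (Rle_dec _ _); [|left; apply exp_pos].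
  rewrite <- exp_0 at 1. apply exp_le. apply Rmult_le_pos; lra.
Qed.

Lemma expectn_md_error_le L t k : proba_law L -> nonneg_law L -> 0 <= t ->
  0 <= expect L (fun x => exp (- (2 * t) * x)) <= 1 ->
  expectn L (2 ^ S k) (fun v => indic (md_error (S k) v))
  <= (2 * 2 ^ S k - 1) * expect L (fun x => exp (- (2 * t) * x)) ^ 2 ^ k.
Proof.
  intros HL Hn Ht HM.
  destruct (rm1_code_split (S k)) as [rest [Hcode [Hlen Hrest]]].
  eapply Rle_trans.
  { apply expectn_le; [assumption|]. intros v. exact (md_error_le_pairwise t _ rest v Ht Hcode). }
  rewrite expectn_sum by assumption.
  eapply Rle_trans; [apply sumR_map_le_const|].
  - intros c Hc. destruct (Hrest c Hc) as [a0 [a [-> Ha]]].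
    now apply expectn_pairwise_term_le.
  - rewrite Hlen, minus_INR, mult_INR, pow_INR by (pose proof (Nat.pow_nonzero 2 (S k)); lia).
    right. f_equal.
Qed.

Lemma p_biorth_le e m xi : 0 <= e <= 1 -> (length xi < m)%nat ->
  p_biorth e m xi <= (2 * 2 ^ (m - length xi) - 1)
    * exp (- ((e ^ 2 ^ zeros xi) ^ 2 / (2 * var_proxy e (zeros xi) (ones xi))))
      ^ 2 ^ (m - length xi - 1).
Proof.
  intros He Hm. set (L := law_path xi (bit_law e)).
  assert (HLp : proba_law L) by apply law_path_bit_law_proba.
  assert (HLn : nonneg_law L) by (apply law_path_bit_law_nonneg; lra).
  set (mu := e ^ 2 ^ zeros xi). set (s2 := var_proxy e (zeros xi) (ones xi)).
  assert (Hmu : 0 <= mu) by (apply pow_le; lra).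
  assert (Hs2 : 0 < s2) by apply var_proxy_pos.
  assert (Hch : expect L (fun x => exp (- (mu / s2) * x)) <= exp (- (mu ^ 2 / (2 * s2))))
    by (apply subgaussian_chernoff; [assumption | now apply law_path_subgaussian]).
  assert (HM0 : 0 <= expect L (fun x => exp (- (mu / s2) * x)))
    by (apply expect_nonneg; [assumption | intros; left; apply exp_pos]).
  unfold p_biorth. rewrite (Ex_yxi e m xi (fun v => indic (md_error (m - length xi) v))) by lia.
  fold L. set (k := (m - length xi - 1)%nat). replace (m - length xi)%nat with (S k) by lia.
  replace (mu / s2) with (2 * (mu / s2 / 2)) in Hch, HM0 by (field; lra).
  eapply Rle_trans; [apply (expectn_md_error_le L (mu / s2 / 2)); auto|].
  - apply Rmult_le_pos; [apply Rmult_le_pos|]; try lra. apply Rlt_le, Rinv_0_lt_compat, Hs2.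
  - split; [assumption|]. eapply Rle_trans; [apply Hch|]. rewrite <- exp_0. apply exp_le.
    assert (0 <= mu ^ 2 / (2 * s2)) by (apply Rdiv_le_0_compat; [apply pow2_ge_0 | lra]). lra.
  - apply Rmult_le_compat_l; [pose proof (pow_R1_Rle 2 (S k)); lra|].
    now apply pow_incr.
Qed.

Lemma endpath_final_node m r xi : endpath m r xi -> (1 <= r <= m)%nat -> (2 <= m)%nat ->
  final_node m r xi = ((m - length xi)%nat, (r - zeros xi)%nat) /\
  (length xi + 2 <= m)%nat /\ (zeros xi < r)%nat /\ (r - zeros xi <= m - length xi)%nat.
Proof.
  unfold zeros. revert m r; induction xi as [|b xi IH]; intros m r H Hr Hm; simpl in *.
  - rewrite !Nat.sub_0_r. repeat split; lia.
  - destruct H as [Hrm H].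
    destruct (IH (m - 1)%nat (if b then r else (r - 1)%nat) H) as [E [H1 [H2 H3]]];
      [destruct b; lia | lia |].
    rewrite E. destruct b; simpl in *; repeat split; try (f_equal; lia); lia.
Qed.

(** * Asymptotics *)

Lemma exp_pow_nat x n : exp x ^ n = exp (INR n * x).
Proof.
  induction n as [|n IH]; simpl pow.
  - now rewrite Rmult_0_l, exp_0.
  - rewrite IH, <- exp_plus, S_INR. f_equal. ring.
Qed.

Lemma pow2_exp_ln2 m : 2 ^ m = exp (INR m * ln 2).
Proof. rewrite <- Rpower_pow by lra. reflexivity. Qed.

Lemma ln2_pos : 0 < ln 2.
Proof. pose proof ln_lt_2; lra. Qed.

Lemma pow_le_pow_inv x y n : 0 <= x -> 0 <= y -> (0 < n)%nat -> x ^ n <= y ^ n -> x <= y.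
Proof.
  intros Hx Hy Hn H. destruct (Rle_lt_dec x y) as [|Hlt]; [assumption | exfalso].
  assert (Hstrict : forall k, y ^ S k < x ^ S k).
  { induction k as [|k IH]; [simpl; lra|].
    change (y * y ^ S k < x * x ^ S k). pose proof (pow_le y (S k) Hy). nra. }
  destruct n as [|n]; [lia|]. specialize (Hstrict n). lra.
Qed.

(* [2^m = exp (m ln 2) >= (m ln 2 / (p + 1))^(p + 1)] beats every [C m^p]. *)
Lemma pow_lt_pow2_eventually p C : eventually (fun m => C * INR m ^ p < 2 ^ m).
Proof.
  set (a := (ln 2 / INR (S p)) ^ S p).
  assert (HS : 0 < INR (S p)) by (apply lt_0_INR; lia).
  assert (Ha : 0 < a) by (apply pow_lt, Rdiv_lt_0_compat; [apply ln2_pos | lra]).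
  destruct (INR_unbounded (Rabs C / a)) as [N HN].
  exists (S N). intros m Hm.
  assert (HmN : Rabs C / a < INR m) by (apply Rlt_le_trans with (INR N); [lra | apply le_INR; lia]).
  assert (Hmp : 0 < INR m ^ p) by (apply pow_lt, lt_0_INR; lia).
  assert (Hlb : INR m * INR m ^ p * a <= 2 ^ m).
  { rewrite pow2_exp_ln2.
    replace (INR m * INR m ^ p * a) with ((INR m * ln 2 / INR (S p)) ^ S p)
      by (unfold a, Rdiv; rewrite !Rpow_mult_distr; simpl pow; ring).
    replace (exp (INR m * ln 2)) with (exp (INR m * ln 2 / INR (S p)) ^ S p)
      by (rewrite exp_pow_nat; f_equal; field; lra).
    apply pow_incr. split.
    - apply Rdiv_le_0_compat; [apply Rmult_le_pos; [apply pos_INR | pose proof ln2_pos; lra] | lra].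
    - pose proof (exp_ineq1_le (INR m * ln 2 / INR (S p))). lra. }
  assert (C <= Rabs C) by apply Rle_abs.
  assert (Rabs C < INR m * a) by (apply (Rmult_lt_compat_r a) in HmN; [|lra];
    unfold Rdiv in HmN; rewrite Rmult_assoc, Rinv_l in HmN; lra).
  nra.
Qed.

Lemma eps_tilde_pow2 c r m : 0 < c * INR m * 2 ^ r / 2 ^ m ->
  eps_tilde c r m ^ 2 ^ r = c * INR m * 2 ^ r / 2 ^ m.
Proof.
  intros Hd. unfold eps_tilde.
  rewrite <- Rpower_pow by apply exp_pos. rewrite Rpower_mult, pow_INR.
  replace (INR 2) with 2 by reflexivity.
  rewrite Rinv_l by (apply pow_nonzero; lra). now apply Rpower_1.
Qed.

Lemma eps_tilde_sq_small r c : (1 <= r)%nat -> 0 < c ->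
  eventually (fun m => c * INR m * eps_tilde c r m ^ 2 * 2 ^ (r - 1) <= 2 * ln 2).
Proof.
  intros Hr Hc.
  set (q := (2 ^ (r - 1))%nat).
  assert (Hq : (2 * q)%nat = (2 ^ r)%nat)
    by (unfold q; replace r with (S (r - 1)) at 2 by lia; simpl; lia).
  assert (H2r : 0 < 2 ^ (r - 1)) by (apply pow_lt; lra).
  set (K := 2 * ln 2 / (c * 2 ^ (r - 1))).
  assert (HK : 0 < K) by (apply Rdiv_lt_0_compat; pose proof ln2_pos; nra).
  assert (HKq : 0 < K ^ q) by (apply pow_lt, HK).
  destruct (pow_lt_pow2_eventually (S q) (c * 2 ^ r / K ^ q)) as [N HN].
  exists (S N). intros m Hm. specialize (HN m ltac:(lia)).
  assert (Hm0 : 0 < INR m) by (apply lt_0_INR; lia).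
  assert (H2m : 0 < 2 ^ m) by (apply pow_lt; lra).
  set (e := eps_tilde c r m).
  assert (Hd : e ^ 2 ^ r = c * INR m * 2 ^ r / 2 ^ m).
  { apply eps_tilde_pow2. apply Rdiv_lt_0_compat; [|assumption].
    apply Rmult_lt_0_compat; [nra | apply pow_lt; lra]. }
  assert (Hx : INR m * e ^ 2 <= K).
  { apply (pow_le_pow_inv _ _ q);
      [pose proof (pow2_ge_0 e); nra | lra | pose proof (Nat.pow_nonzero 2 (r - 1)); lia|].
    rewrite Rpow_mult_distr, <- pow_mult, Hq, Hd.
    replace (INR m ^ q * (c * INR m * 2 ^ r / 2 ^ m))
      with (c * 2 ^ r / K ^ q * INR m ^ S q * (K ^ q / 2 ^ m)) by (simpl; field; lra).
    apply Rle_trans with (2 ^ m * (K ^ q / 2 ^ m)).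
    - apply Rmult_le_compat_r; [apply Rlt_le, Rdiv_lt_0_compat |]; lra.
    - right. field. lra. }
  apply Rle_trans with (c * 2 ^ (r - 1) * K).
  - replace (c * INR m * e ^ 2 * 2 ^ (r - 1)) with (c * 2 ^ (r - 1) * (INR m * e ^ 2)) by ring.
    apply Rmult_le_compat_l; [nra | assumption].
  - right. unfold K. field. lra.
Qed.

Lemma one_plus_pow_le x n : 0 <= x <= 1 -> (1 + x) ^ n <= 1 + x * (2 ^ n - 1).
Proof.
  intros H; induction n as [|n IH]; simpl; [lra|].
  assert (1 <= 2 ^ n) by (apply pow_R1_Rle; lra).
  assert (0 <= (1 + x) ^ n) by (apply pow_le; lra).
  assert ((1 + x) * (1 + x) ^ n <= (1 + x) * (1 + x * (2 ^ n - 1))) by (apply Rmult_le_compat_l; lra).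
  assert (x * x * (2 ^ n - 1) <= x * (2 ^ n - 1)) by (apply Rmult_le_compat_r; nra).
  nra.
Qed.

Lemma exp_neg_div_le a P : 0 <= a -> 1 <= P -> a * (P - 1) <= 2 * ln 2 ->
  exp (- (a / (2 * P))) <= 2 * exp (- (a / 2)).
Proof.
  intros Ha HP H.
  apply Rle_trans with (exp (ln 2 + - (a / 2))); [apply exp_le | rewrite exp_plus, exp_ln; lra].
  assert (E : a / 2 - a / (2 * P) = a * (P - 1) / 2 / P) by (field; lra).
  assert (HP' : / P <= 1) by (rewrite <- Rinv_1; apply Rinv_le_contravar; lra).
  assert (0 <= a * (P - 1)) by nra.
  assert (a * (P - 1) / 2 / P <= a * (P - 1) / 2) by (unfold Rdiv at 2; nra).
  lra.
Qed.

Lemma INR_pow2 n : INR (2 ^ n) = 2 ^ n.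
Proof. rewrite pow_INR. f_equal. Qed.

Lemma exp_rate_eq c m : exp (- (c / 2 - ln 2) * INR m) = 2 ^ m * exp (- (c * INR m / 2)).
Proof. rewrite pow2_exp_ln2, <- exp_plus. f_equal. lra. Qed.

Lemma pow2_le a b : (a <= b)%nat -> 2 ^ a <= 2 ^ b.
Proof. intros H. apply Rle_pow; [lra | assumption]. Qed.

(* For [o = 0] the exponent is exactly [c m / 2]; otherwise the factor [2] lost in
   [exp_neg_div_le] is paid for by the room [o >= 1] leaves in [2^(k+3) <= 2^m]. *)
Lemma biorth_error_lt c m k o r e : (2 <= r)%nat -> (k + o + r = m)%nat -> 0 < c -> 0 <= e <= 1 ->
  e ^ 2 ^ r = c * INR m * 2 ^ r / 2 ^ m ->
  c * INR m * e ^ 2 * 2 ^ (r - 1) <= 2 * ln 2 ->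
  (2 * 2 ^ S k - 1) * exp (- ((e ^ 2 ^ (r - 1)) ^ 2 / (2 * var_proxy e (r - 1) o))) ^ 2 ^ k
  < exp (- (c / 2 - ln 2) * INR m).
Proof.
  intros Hr Hm Hc He Hd Hsmall.
  assert (H2 : forall n, 0 < 2 ^ n) by (intros; apply pow_lt; lra).
  assert (Hcm : 0 <= c * INR m) by (pose proof (pos_INR m); nra).
  assert (Hmu : (e ^ 2 ^ (r - 1)) ^ 2 * 2 ^ (k + o) = c * INR m).
  { replace ((e ^ 2 ^ (r - 1)) ^ 2) with (e ^ 2 ^ r)
      by (replace r with (S (r - 1)) at 1 by lia; rewrite pow_pow2_S; ring).
    rewrite Hd. replace (2 ^ m) with (2 ^ (k + o) * 2 ^ r) by (rewrite <- pow_add; f_equal; lia).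
    field. split; apply pow_nonzero; lra. }
  rewrite exp_pow_nat, INR_pow2, exp_rate_eq.
  set (Y := exp (- (c * INR m / 2))). assert (HY : 0 < Y) by apply exp_pos.
  unfold var_proxy. destruct (o =? 0)%nat eqn:Ho.
  - apply Nat.eqb_eq in Ho. subst o. rewrite Nat.add_0_r in Hmu.
    replace (2 ^ k * - ((e ^ 2 ^ (r - 1)) ^ 2 / (2 * 1))) with (- (c * INR m / 2))
      by (rewrite <- Hmu; field).
    fold Y. assert (2 * 2 ^ S k <= 2 ^ m) by (apply (pow2_le (S (S k))); lia).
    nra.
  - apply Nat.eqb_neq in Ho.
    set (P := (1 + e ^ 2) ^ (r - 1)).
    assert (HP1 : 1 <= P) by (apply pow_R1_Rle; pose proof (pow2_ge_0 e); lra).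
    replace (2 ^ k * - ((e ^ 2 ^ (r - 1)) ^ 2 / (2 * (P / 2 ^ o)))) with (- (c * INR m / (2 * P)))
      by (rewrite <- Hmu, pow_add; field; split; [apply pow_nonzero |]; lra).
    assert (HPu : P - 1 <= e ^ 2 * 2 ^ (r - 1)).
    { pose proof (one_plus_pow_le (e ^ 2) (r - 1) (pow_le_1 e 2 He)).
      pose proof (pow2_ge_0 e). unfold P. nra. }
    assert (Hloss : exp (- (c * INR m / (2 * P))) <= 2 * Y).
    { apply exp_neg_div_le; [assumption | assumption |].
      apply Rle_trans with (c * INR m * (e ^ 2 * 2 ^ (r - 1))); [apply Rmult_le_compat_l; lra | lra]. }
    assert (2 * 2 ^ S k * 2 <= 2 ^ m).
    { replace (2 * 2 ^ S k * 2) with (2 ^ S (S (S k))) by (simpl; ring). apply pow2_le; lia. }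
    assert (1 <= 2 ^ S k) by (apply pow_R1_Rle; lra).
    apply Rle_lt_trans with ((2 * 2 ^ S k - 1) * (2 * Y)); [apply Rmult_le_compat_l; lra | nra].
Qed.

(* The exponent is at least [X = sqrt (c m 2^(m-r)) / 2^(r+1)], far above [c' m]. *)
Lemma full_error_lt c m z r e : (z + 2 <= r)%nat -> (r < m)%nat -> 0 < c -> 0 <= e <= 1 ->
  e ^ 2 ^ r = c * INR m * 2 ^ r / 2 ^ m ->
  (c / 2 - ln 2) ^ 2 * 2 ^ (3 * r + 2) * INR m < c * 2 ^ m ->
  exp (- ((e ^ 2 ^ z) ^ 2 / (2 * var_proxy e z (m - r)))) < exp (- (c / 2 - ln 2) * INR m).
Proof.
  intros Hz Hm Hc He Hd Hbig.
  assert (H2 : forall n, 0 < 2 ^ n) by (intros; apply pow_lt; lra).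
  assert (Hm0 : 0 < INR m) by (apply lt_0_INR; lia).
  set (w := e ^ 2 ^ (r - 1)).
  assert (Hw0 : 0 <= w) by (apply pow_le; lra).
  assert (Hww : w * w * 2 ^ (m - r) = c * INR m).
  { unfold w. rewrite <- pow_pow2_S. replace (S (r - 1)) with r by lia.
    rewrite Hd. replace (2 ^ m) with (2 ^ (m - r) * 2 ^ r) by (rewrite <- pow_add; f_equal; lia).
    field. split; apply pow_nonzero; lra. }
  assert (Hmu : w <= (e ^ 2 ^ z) ^ 2).
  { replace ((e ^ 2 ^ z) ^ 2) with (e ^ 2 ^ S z) by (rewrite pow_pow2_S; ring).
    apply pow_decr; [assumption | apply Nat.pow_le_mono_r; lia]. }
  assert (Hvar : 0 < var_proxy e z (m - r) <= 2 ^ r / 2 ^ (m - r)).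
  { split; [apply var_proxy_pos|]. unfold var_proxy.
    replace (m - r =? 0)%nat with false by (symmetry; apply Nat.eqb_neq; lia).
    unfold Rdiv. apply Rmult_le_compat_r; [apply Rlt_le, Rinv_0_lt_compat, H2|].
    apply Rle_trans with (2 ^ z);
      [apply pow_incr; pose proof (pow_le_1 e 2 He); lra | apply pow2_le; lia]. }
  set (X := w * 2 ^ (m - r) / (2 * 2 ^ r)).
  assert (HX : X <= (e ^ 2 ^ z) ^ 2 / (2 * var_proxy e z (m - r))).
  { apply Rle_trans with (w / (2 * var_proxy e z (m - r))).
    - apply Rle_trans with (w / (2 * (2 ^ r / 2 ^ (m - r)))).
      + right. unfold X. field. split; apply pow_nonzero; lra.
      + apply Rmult_le_compat_l; [assumption|]. apply Rinv_le_contravar; lra.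
    - apply Rmult_le_compat_r; [apply Rlt_le, Rinv_0_lt_compat; lra | assumption]. }
  assert (HXX : X * X * (4 * 2 ^ r * 2 ^ r * 2 ^ r) = c * INR m * 2 ^ m).
  { unfold X. replace (2 ^ m) with (2 ^ (m - r) * 2 ^ r) by (rewrite <- pow_add; f_equal; lia).
    rewrite <- Hww. field. apply pow_nonzero; lra. }
  assert (H3r : 2 ^ (3 * r + 2) = 4 * 2 ^ r * 2 ^ r * 2 ^ r)
    by (replace (3 * r + 2)%nat with (r + (r + (r + 2)))%nat by lia; rewrite !pow_add; simpl; ring).
  rewrite H3r in Hbig.
  assert (Hrate : (c / 2 - ln 2) * INR m < X).
  { assert (HX0 : 0 <= X).
    { unfold X. pose proof (H2 r); pose proof (H2 (m - r)%nat).
      apply Rdiv_le_0_compat; [apply Rmult_le_pos|]; lra. }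
    set (Q := 4 * 2 ^ r * 2 ^ r * 2 ^ r) in *.
    assert (HQ : 0 < Q) by (unfold Q; pose proof (H2 r); repeat apply Rmult_lt_0_compat; lra).
    assert (Hsq : ((c / 2 - ln 2) * INR m) ^ 2 * Q < X * X * Q) by (rewrite HXX; nra).
    apply Rmult_lt_reg_r in Hsq; [|assumption]. nra. }
  apply Rle_lt_trans with (exp (- X)); [apply exp_le; lra | apply exp_increasing; lra].
Qed.

Lemma eps_tilde_bounds c r m : 0 < c -> (0 < m)%nat -> c * INR m * 2 ^ r < 2 ^ m ->
  0 <= eps_tilde c r m <= 1 /\ eps_tilde c r m ^ 2 ^ r = c * INR m * 2 ^ r / 2 ^ m.
Proof.
  intros Hc Hm Hd.
  assert (H2m : 0 < 2 ^ m) by (apply pow_lt; lra).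
  assert (Hd0 : 0 < c * INR m * 2 ^ r / 2 ^ m).
  { apply Rdiv_lt_0_compat; [|assumption].
    apply Rmult_lt_0_compat; [apply Rmult_lt_0_compat; [|apply lt_0_INR] | apply pow_lt]; lra || lia. }
  pose proof (eps_tilde_pow2 c r m Hd0) as Hpow.
  assert (He0 : 0 <= eps_tilde c r m) by (left; apply exp_pos).
  split; [split; [assumption|] | assumption].
  apply (pow_le_pow_inv _ _ (2 ^ r)); [lra | lra | pose proof (Nat.pow_nonzero 2 r); lia |].
  rewrite Hpow, pow1. apply Rmult_le_reg_r with (2 ^ m); [assumption|].
  unfold Rdiv. rewrite Rmult_assoc, Rinv_l; lra.
Qed.

Lemma large_m_eventually r c : (2 <= r)%nat -> 0 < c ->
  eventually (fun m => (r < m)%nat /\ c * INR m * 2 ^ r < 2 ^ m /\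
    c * INR m * eps_tilde c r m ^ 2 * 2 ^ (r - 1) <= 2 * ln 2 /\
    (c / 2 - ln 2) ^ 2 * 2 ^ (3 * r + 2) * INR m < c * 2 ^ m).
Proof.
  intros Hr Hc. repeat apply filter_and.
  - now exists (S r).
  - generalize (pow_lt_pow2_eventually 1 (c * 2 ^ r)). apply filter_imp.
    intros m H. rewrite pow_1 in H. lra.
  - apply eps_tilde_sq_small; [lia | assumption].
  - generalize (pow_lt_pow2_eventually 1 ((c / 2 - ln 2) ^ 2 * 2 ^ (3 * r + 2) / c)).
    apply filter_imp. intros m H. rewrite pow_1 in H.
    apply (Rmult_lt_compat_l c) in H; [|assumption].
    replace (c * ((c / 2 - ln 2) ^ 2 * 2 ^ (3 * r + 2) / c * INR m))
      with ((c / 2 - ln 2) ^ 2 * 2 ^ (3 * r + 2) * INR m) in H by (field; lra).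
    lra.
Qed.

Theorem theorem4 (r : nat) (c : R) :
  (2 <= r)%nat -> ln 4 < c ->
  exists M : nat, forall m : nat, (M <= m)%nat ->
    forall xi : list bool, endpath m r xi ->
      (snd (final_node m r xi) = 1%nat ->
         p_biorth (eps_tilde c r m) m xi < err_bound c r m) /\
      (snd (final_node m r xi) = fst (final_node m r xi) ->
         forall sigma : nat, (sigma < 2 ^ (m - length xi))%nat ->
           p_full (eps_tilde c r m) m xi sigma < err_bound c r m).
Proof.
  intros Hr Hc.
  assert (Hc0 : 0 < c) by (enough (0 < ln 4) by lra; rewrite <- ln_1; apply ln_increasing; lra).
  destruct (large_m_eventually r c Hr Hc0) as [M HM]. exists M.
  intros m Hm xi Hpath. destruct (HM m Hm) as [Hrm [Hd [Hsmall Hbig]]].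
  destruct (eps_tilde_bounds c r m) as [He Hpow]; [assumption | lia | assumption |].
  destruct (endpath_final_node m r xi Hpath) as [-> [Hlen [Hz Hzm]]]; [lia | lia |].
  pose proof (length_zeros_ones xi). cbn [fst snd]. split.
  - intros Hz1. eapply Rle_lt_trans; [apply p_biorth_le; [assumption | lia]|].
    replace (zeros xi) with (r - 1)%nat by lia.
    set (k := (m - length xi - 1)%nat). replace (m - length xi)%nat with (S k) by lia.
    eapply Rlt_le_trans; [|apply Rmax_l].
    apply biorth_error_lt; auto; lia.
  - intros Hfull s Hs. eapply Rle_lt_trans; [apply p_full_le; [assumption | lia | assumption]|].
    replace (ones xi) with (m - r)%nat by lia.
    eapply Rlt_le_trans; [|apply Rmax_l].
    apply full_error_lt; auto; lia.
Qed.
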